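(* The matrix $U_3=\frac{1}{\sqrt3}\left(I_2^{\otimes 3}+i\,\sigma_1^{\otimes 3}+i\,\sigma_3^{\otimes 3}\right)$ on $\mathbb{C}^2\otimes\mathbb{C}^2\otimes\mathbb{C}^2$ is unitary and $\mathrm{sr}(U_3)=3$.
   Context: $I_2$ is the $2\times2$ identity, $\sigma_1=\begin{bmatrix}0&1\\1&0\end{bmatrix}$, $\sigma_3=\begin{bmatrix}1&0\\0&-1\end{bmatrix}$. For a matrix $U$ on $\mathbb{C}^2\otimes\mathbb{C}^2\otimes\mathbb{C}^2$ (systems $A,B,C$), its Schmidt rank $\mathrm{sr}(U)$ is the least integer $r$ such that $U=\sum_{j=1}^r A_j\otimes B_j\otimes C_j$ with $A_j,B_j,C_j$ complex $2\times 2$ matrices (i.e. the tensor rank of $U$). *)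

From HB Require Import structures.
From mathcomp Require Import all_boot all_order all_algebra.
From mathcomp Require Import mxtens.
Set Implicit Arguments. Unset Strict Implicit. Unset Printing Implicit Defensive.
Import Order.TTheory GRing.Theory Num.Theory.
Local Open Scope ring_scope.

(* The three-qubit space C^2 (x) C^2 (x) C^2 is
   represented by 'M_((2*2)*2) with the Kronecker ordering A (x) B (x) C. *)

Section Defs.
Variable C : numClosedFieldType.

Definition tens3 (A B D : 'M[C]_2) : 'M[C]_(2 * 2 * 2) := tensmx (tensmx A B) D.

Definition I2 : 'M[C]_2 := 1%:M.
Definition sigma1 : 'M[C]_2 := \matrix_(i < 2, j < 2) (if i == j then 0 else 1).
Definition sigma3 : 'M[C]_2 :=
  \matrix_(i < 2, j < 2) (if i == j then (if i == 0 :> nat then 1 else -1) else 0).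

Definition adjmx m n (M : 'M[C]_(m, n)) : 'M[C]_(n, m) := map_mx Num.conj (M^T).

Definition unitary n (U : 'M[C]_n) : Prop :=
  U *m adjmx U = 1%:M /\ adjmx U *m U = 1%:M.

Definition tens_decomp_le (U : 'M[C]_(2 * 2 * 2)) (r : nat) : Prop :=
  exists (A B D : 'I_r -> 'M[C]_2), U = \sum_(j < r) tens3 (A j) (B j) (D j).

Definition schmidt_rank_eq (U : 'M[C]_(2 * 2 * 2)) (r : nat) : Prop :=
  tens_decomp_le U r /\ forall r', (r' < r)%N -> ~ tens_decomp_le U r'.

Definition U3 : 'M[C]_(2 * 2 * 2) :=
  (sqrtC 3)^-1 *: (tens3 I2 I2 I2 + 'i *: tens3 sigma1 sigma1 sigma1
                                     + 'i *: tens3 sigma3 sigma3 sigma3).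
End Defs.

(* Put S = s1(x)s1(x)s1 + s3(x)s3(x)s3.  Since s1, s3 are Hermitian
   involutions that anticommute, and a tensor product of three anticommuting
   pairs anticommutes, S is Hermitian with S^2 = 2.  Hence U3 = (1 + iS)/sqrt 3
   and a general "Cayley" computation shows (1 + iS)/sqrt(1 + c) is unitary
   whenever S is Hermitian with S^2 = c >= 0.

   The defining formula of U3 is a decomposition with three terms.  For
   the lower bound we flatten U along the cut A | BC: a sum of r product terms
   A_j (x) B_j (x) D_j gives a flattening that factors through an r-dimensional
   space, so every n x n minor of it with r < n has determinant zero.  An
   explicit 3 x 3 minor of the flattening of U3 has determinant -4/(3 sqrt 3),
   hence no decomposition with fewer than 3 terms exists. *)

From HB Require Import structures.
From mathcomp Require Import all_boot all_order all_algebra.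
From mathcomp Require Import mxtens ring.
Import Order.TTheory GRing.Theory Num.Theory.
Local Open Scope ring_scope.

Section SmallMatrices.
Variable R : comNzRingType.

Lemma mx2P (A B : 'M[R]_2) :
  A 0 0 = B 0 0 -> A 0 1 = B 0 1 -> A 1 0 = B 1 0 -> A 1 1 = B 1 1 -> A = B.
Proof.
have ord2_cases (k : 'I_2) : k = 0 \/ k = 1.
  by case: k => [[|[|//]] ?]; [left|right]; apply: val_inj.
move=> e00 e01 e10 e11; apply/matrixP=> i j.
by case: (ord2_cases i) => ->; case: (ord2_cases j) => ->.
Qed.

Lemma mulmx2E (A B : 'M[R]_2) i j : (A *m B) i j = A i 0 * B 0 j + A i 1 * B 1 j.
Proof.
have -> : (1 : 'I_2) = lift ord0 ord0 by apply: val_inj.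
by rewrite !mxE !big_ord_recl big_ord0 addr0.
Qed.

Lemma det_mx22 (A : 'M[R]_2) : \det A = A 0 0 * A 1 1 - A 0 1 * A 1 0.
Proof.
have -> : (1 : 'I_2) = lift ord0 ord0 by apply: val_inj.
rewrite (expand_det_row _ 0) !big_ord_recl big_ord0 addr0 /cofactor !det_mx11 !mxE /=.
have -> : lift 0 0 = lift ord0 ord0 :> 'I_2 by apply: val_inj.
have -> : lift (lift ord0 ord0) 0 = 0 :> 'I_2 by apply: val_inj.
by rewrite !expr0 expr1 /=; ring.
Qed.

Lemma det_mx33 (A : 'M[R]_3) :
  \det A = A 0 0 * (A 1 1 * A 2 2 - A 1 2 * A 2 1)
         - A 0 1 * (A 1 0 * A 2 2 - A 1 2 * A 2 0)
         + A 0 2 * (A 1 0 * A 2 1 - A 1 1 * A 2 0).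
Proof.
(* Reindexing entries by natural numbers lets all cofactor indices compute. *)
pose f i j := A (inord i) (inord j).
have -> : A = \matrix_(i, j) f i j by apply/matrixP => i j; rewrite mxE /f !inord_val.
rewrite (expand_det_row _ 0) !big_ord_recl big_ord0 addr0 /cofactor !det_mx22 !mxE /bump /=.
rewrite (_ : 1 %% 2 = 1)%N // (_ : 1 %% 3 = 1)%N // (_ : (1 + 1) %% 3 = 2)%N //.
ring.
Qed.

Lemma tensmx1 m n :
  (1%:M : 'M[R]_m) *t (1%:M : 'M[R]_n) = 1%:M.
Proof.
apply/matrixP=> i j.
case: (mxtens_indexP i) => i1 i2; case: (mxtens_indexP j) => j1 j2.
by rewrite tensmxE !mxE (inj_eq (can_inj (@mxtens_indexK _ _))) xpair_eqE -natrM mulnb.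
Qed.

End SmallMatrices.

Lemma det_mulmx_lowrank (F : fieldType) n r (X : 'M[F]_(n, r)) (Y : 'M[F]_(r, n)) :
  (r < n)%N -> \det (X *m Y) = 0.
Proof.
move=> ltrn; apply/eqP; apply: contraTT ltrn => detXY.
rewrite -leqNgt -[n](eqP (_ : row_free (X *m Y))); last first.
  by rewrite row_free_unit unitmxE unitfE.
exact: leq_trans (mxrankM_maxl _ _) (rank_leq_col _).
Qed.

Section Adjoint.
Variable C : numClosedFieldType.

Lemma adjmxD m n (M N : 'M[C]_(m, n)) : adjmx (M + N) = adjmx M + adjmx N.
Proof. by apply/matrixP=> i j; rewrite !mxE rmorphD. Qed.

Lemma adjmxZ m n (a : C) (M : 'M[C]_(m, n)) : adjmx (a *: M) = a^* *: adjmx M.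
Proof. by apply/matrixP=> i j; rewrite !mxE rmorphM. Qed.

Lemma adjmx1 n : adjmx (1%:M : 'M[C]_n) = 1%:M.
Proof. by apply/matrixP=> i j; rewrite !mxE rmorph_nat eq_sym. Qed.

End Adjoint.

Section ThreeQubits.
Variable C : numClosedFieldType.
Implicit Types A B D : 'M[C]_2.

Definition idx3 (i1 i2 i3 : 'I_2) : 'I_(2 * 2 * 2) :=
  mxtens_index (mxtens_index (i1, i2), i3).

Lemma tens3E A B D i1 i2 i3 j1 j2 j3 :
  tens3 A B D (idx3 i1 i2 i3) (idx3 j1 j2 j3) = A i1 j1 * B i2 j2 * D i3 j3.
Proof. by rewrite /tens3 /idx3 !tensmxE. Qed.

Lemma tens3_mul A B D A' B' D' :
  tens3 A B D *m tens3 A' B' D' = tens3 (A *m A') (B *m B') (D *m D').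
Proof. by rewrite /tens3 !tensmx_mul. Qed.

Lemma adjmx_tens3 A B D : adjmx (tens3 A B D) = tens3 (adjmx A) (adjmx B) (adjmx D).
Proof. by rewrite /adjmx /tens3 !trmx_tens !map_mxT. Qed.

Lemma tens3Z A B D (c : C) : tens3 A B (c *: D) = c *: tens3 A B D.
Proof. by apply/matrixP=> i j; rewrite !mxE mulrCA. Qed.

Lemma tens3N A B D : tens3 (- A) (- B) (- D) = - tens3 A B D.
Proof. by apply/matrixP=> i j; rewrite !mxE mulrNN mulrN. Qed.

Lemma tens3_1 : tens3 (1%:M : 'M[C]_2) 1%:M 1%:M = 1%:M.
Proof. by rewrite /tens3 !tensmx1. Qed.

End ThreeQubits.

Section Pauli.
Variable C : numClosedFieldType.

Lemma sigma1_herm : adjmx (sigma1 C) = sigma1 C.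
Proof. by apply: mx2P; rewrite !mxE /= ?rmorph0 ?rmorph1. Qed.

Lemma sigma3_herm : adjmx (sigma3 C) = sigma3 C.
Proof. by apply: mx2P; rewrite !mxE /= ?rmorph0 ?rmorph1 ?rmorphN1. Qed.

Lemma sigma1_sqr : sigma1 C *m sigma1 C = 1%:M.
Proof. by apply: mx2P; rewrite !mulmx2E !mxE /=; ring. Qed.

Lemma sigma3_sqr : sigma3 C *m sigma3 C = 1%:M.
Proof. by apply: mx2P; rewrite !mulmx2E !mxE /=; ring. Qed.

Lemma sigma13_anticomm : sigma1 C *m sigma3 C = - (sigma3 C *m sigma1 C).
Proof. by apply: mx2P; rewrite !(mulmx2E, mxE) /=; ring. Qed.

End Pauli.

Section Unitarity.
Variable C : numClosedFieldType.

(* If S is Hermitian with S^2 = c >= 0, then (1 + iS)/sqrt(1 + c) is unitary: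
   its adjoint is (1 - iS)/sqrt(1 + c) and (1 + iS)(1 - iS) = 1 + c. *)
Lemma unitary_cayley n (S : 'M[C]_n) (c : C) :
  0 <= c -> adjmx S = S -> S *m S = c%:M ->
  unitary ((sqrtC (1 + c))^-1 *: (1%:M + 'i *: S)).
Proof.
move=> c_ge0 S_herm S_sqr.
set s := (sqrtC (1 + c))^-1.
have s_real : s^* = s by apply: geC0_conj; rewrite invr_ge0 sqrtC_ge0 addr_ge0.
have s_norm : s * s * (1 + c) = 1.
  by rewrite -invfM -expr2 sqrtCK mulVf // gt_eqF // ltr_pwDl.
have adjU : adjmx (s *: (1%:M + 'i *: S)) = s *: (1%:M + (- 'i) *: S).
  by rewrite adjmxZ adjmxD adjmx1 adjmxZ s_real conjCi S_herm.
have prod (a : C) :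
    (1%:M + a *: S) *m (1%:M + (- a) *: S) = (1 - a ^+ 2 * c) *: 1%:M.
  rewrite mulmxDl mulmxDr !mul1mx mulmxDr mulmx1 -!scalemxAl -scalemxAr scalerA S_sqr.
  by rewrite -scalemx1; apply/matrixP=> i j; rewrite !mxE; ring.
have norm (a : C) : a ^+ 2 = -1 -> s * s * (1 - a ^+ 2 * c) = 1.
  by move=> ->; rewrite mulN1r opprK s_norm.
split; rewrite adjU -scalemxAl -scalemxAr scalerA.
  by rewrite prod scalerA norm ?sqrCi // scale1r.
by rewrite -{2}(opprK 'i) prod scalerA norm ?sqrrN ?sqrCi // scale1r.
Qed.

End Unitarity.

Section U3.
Variable C : numClosedFieldType.

Definition pauli_sum : 'M[C]_(2 * 2 * 2) :=
  tens3 (sigma1 C) (sigma1 C) (sigma1 C) + tens3 (sigma3 C) (sigma3 C) (sigma3 C).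

Lemma pauli_sum_herm : adjmx pauli_sum = pauli_sum.
Proof. by rewrite adjmxD !adjmx_tens3 sigma1_herm sigma3_herm. Qed.

(* S^2 = 2 because the two Kronecker cubes anticommute and square to 1. *)
Lemma pauli_sum_sqr : pauli_sum *m pauli_sum = 2%:M.
Proof.
have anticomm : tens3 (sigma1 C) (sigma1 C) (sigma1 C) *m tens3 (sigma3 C) (sigma3 C) (sigma3 C)
             = - (tens3 (sigma3 C) (sigma3 C) (sigma3 C) *m tens3 (sigma1 C) (sigma1 C) (sigma1 C)).
  by rewrite !tens3_mul sigma13_anticomm tens3N.
rewrite mulmxDl !mulmxDr anticomm !tens3_mul sigma1_sqr sigma3_sqr tens3_1.
by rewrite addrA subrK -raddfD.
Qed.

(* 3 = 1 + 2 is the normalization demanded by unitary_cayley. *)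
Lemma U3_cayley : U3 C = (sqrtC (1 + 2))^-1 *: (1%:M + 'i *: pauli_sum).
Proof. by rewrite /U3 /I2 tens3_1 -addrA -scalerDr. Qed.

Lemma U3_unitary : unitary (U3 C).
Proof. by rewrite U3_cayley; apply: unitary_cayley; rewrite ?pauli_sum_herm ?pauli_sum_sqr. Qed.

End U3.

Section SchmidtRank.
Variable C : numClosedFieldType.

Lemma U3_decomp3 : tens_decomp_le (U3 C) 3.
Proof.
pose s : C := (sqrtC 3)^-1.
pose P (j : 'I_3) : 'M[C]_2 := [:: I2 C; sigma1 C; sigma3 C]`_j.
pose c (j : 'I_3) : C := [:: s; s * 'i; s * 'i]`_j.
exists P, P, (fun j => c j *: P j).
by rewrite !big_ord_recl big_ord0 addr0 !tens3Z /U3 !scalerDr !scalerA addrA.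
Qed.

(* The n x n minor of the A | BC flattening of U with rows indexed by pairs
   (i1, j1) and columns by ((i2, j2), (i3, j3)). *)
Definition flat_minor {n} (U : 'M[C]_(2 * 2 * 2))
    (rw : 'I_n -> 'I_2 * 'I_2) (cl : 'I_n -> ('I_2 * 'I_2) * ('I_2 * 'I_2)) : 'M[C]_n :=
  \matrix_(p, q) U (idx3 (rw p).1 (cl q).1.1 (cl q).2.1) (idx3 (rw p).2 (cl q).1.2 (cl q).2.2).

Lemma flat_minor_decomp n r (A B D : 'I_r -> 'M[C]_2) rw cl :
  flat_minor (\sum_(j < r) tens3 (A j) (B j) (D j)) rw cl =
  (\matrix_(p < n, j < r) A j (rw p).1 (rw p).2) *m
  (\matrix_(j < r, q < n) (B j (cl q).1.1 (cl q).1.2 * D j (cl q).2.1 (cl q).2.2)).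
Proof.
apply/matrixP=> p q; rewrite [LHS]mxE summxE [RHS]mxE; apply: eq_bigr => j _.
by rewrite tens3E !mxE mulrA.
Qed.

Lemma det_flat_minor_lowrank n r U rw cl :
  tens_decomp_le U r -> (r < n)%N -> \det (@flat_minor n U rw cl) = 0.
Proof. by case=> A [B [D ->]]; rewrite flat_minor_decomp; apply: det_mulmx_lowrank. Qed.

(* A 3 x 3 minor of the flattening of U3: up to the factor 1/sqrt 3 it is
   [[1+i, 1-i, 0]; [1-i, 1+i, 0]; [0, 0, i]], with determinant -4. *)
Definition U3_rows : 'I_3 -> 'I_2 * 'I_2 := nth (0, 0) [:: (0, 0); (1, 1); (0, 1)].
Definition U3_cols : 'I_3 -> ('I_2 * 'I_2) * ('I_2 * 'I_2) :=
  nth ((0, 0), (0, 0)) [:: ((0, 0), (0, 0)); ((0, 0), (1, 1)); ((0, 1), (0, 1))].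

Lemma det_U3_minor_neq0 : \det (flat_minor (U3 C) U3_rows U3_cols) != 0.
Proof.
have -> : \det (flat_minor (U3 C) U3_rows U3_cols) = - 4 * (sqrtC 3)^-1 ^+ 3.
  rewrite det_mx33 !(tens3E, mxE) /= -[-4](_ : 4 * 'i ^+ 2 = -4); first by ring.
  by rewrite sqrCi mulrN1.
by rewrite mulNr oppr_eq0 mulf_neq0 ?pnatr_eq0 // expf_neq0 // invr_eq0 sqrtC_eq0 pnatr_eq0.
Qed.

End SchmidtRank.

Theorem mainTheorem3 (C : numClosedFieldType) :
  unitary (U3 C) /\ schmidt_rank_eq (U3 C) 3.
Proof.
split; first exact: U3_unitary.
split; first exact: U3_decomp3.
move=> r lt_r3 decomp.
have := det_U3_minor_neq0 C.
by rewrite (@det_flat_minor_lowrank C 3 r _ _ _ decomp lt_r3) eqxx.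
Qed.
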